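(* For all integers $N\ge1$ and $\ell\ge1$, the linear map $\partial^\phi_{<N}:\operatorname{gr}^F_\ell(\mathcal B)_N\to\bigoplus_{r\ge1,\ 3\le2r+1\le N}\operatorname{gr}^F_{\ell-1}(\mathcal B)_{N-2r-1}$, $\ w\mapsto\sum_{r}(\phi\otimes\mathrm{id})\big(\partial^{(\ell)}_{2r+1}(w)\big)$, is an isomorphism of $\mathbb Q$-vector spaces.
   Context: $\mathcal X=\{x_0,x_1\}$, $\mathbb Q\langle\mathcal X\rangle$ free noncommutative polynomials graded by weight (number of letters). $\mathcal B$ is the span of all concatenations of $x_0x_1$ and $x_0x_0x_1$; the level of such a word is the number of blocks $x_0x_0x_1$; $F_\ell\mathcal B$ = span of words of level $\le\ell$; $\operatorname{gr}^F_\ell(\mathcal B)_N=(F_\ell\mathcal B)_N/(F_{\ell-1}\mathcal B)_N$, identified with the span of words of weight $N$ and level exactly $\ell$. For letters: $I(x_1;f;x_0)=f$, $I(x_0;f;x_1)=S(f)$ with $S(\varepsilon_1\cdots\varepsilon_m)=(-1)^m\varepsilon_m\cdots\varepsilon_1$, $I(\varepsilon;f;\varepsilon)$ = coefficient of $\mathbf1$ in $f$ times $\mathbf1$. For a word $w=\varepsilon_1\cdots\varepsilon_N$, $\partial_{2r+1}(w)=\sum_{j=0}^{N-2r-1}I(\varepsilon_j;\varepsilon_{j+1}\cdots\varepsilon_{j+2r+1};\varepsilon_{j+2r+2})\otimes\varepsilon_1\cdots\varepsilon_j\varepsilon_{j+2r+2}\cdots\varepsilon_N$ ($\varepsilon_0=x_1,\varepsilon_{N+1}=x_0$).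 For $w$ of level $\ell$, $\partial^{(\ell)}_{2r+1}(w)$ is $\partial_{2r+1}(w)$ with all summands whose right factor has level $\ne\ell-1$ discarded; its left factors lie in $\mathcal B^1=\operatorname{span}\{(x_0x_1)^ax_0x_0x_1(x_0x_1)^b,\ (x_0x_1)^nx_0: a,b,n\ge0\}$. $\phi:\mathcal B^1\to\mathbb Q$ is linear with $\phi((x_0x_1)^ax_0x_0x_1(x_0x_1)^b)=c^{a+b+1}_{a,b}$ and $\phi((x_0x_1)^nx_0)=2(-1)^n$, where $c^r_{a,b}=2(-1)^r\big(\binom{2r}{2b+2}-(1-2^{-2r})\binom{2r}{2a+1}\big)$; $\phi\otimes\mathrm{id}$ is followed by the identification $\mathbb Q\otimes V=V$. *)

From mathcomp Require Import all_boot all_order all_algebra.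
Set Implicit Arguments. Unset Strict Implicit. Unset Printing Implicit Defensive.
Import Order.TTheory GRing.Theory Num.Theory.
Local Open Scope ring_scope.

(* Letters: x0 = false, x1 = true.  Words in X = {x0,x1} are [seq bool];
   the weight of a word is its size.  An element of Q<X> is represented by
   its coefficient function [word -> rat]. *)
Definition x0 : bool := false.
Definition x1 : bool := true.
Definition word := seq bool.

(* Level of a word of B: a word lies in B iff it is a concatenation of the
   blocks x0x1 and x0x0x1; this decomposition is unique, and [levelB w] parses
   it, returning [Some (number of x0x0x1 blocks)] if w lies in B, and [None]
   otherwise. *)
Fixpoint levelB (w : word) : option nat :=
  match w with
  | [::] => Some 0%N
  | false :: true :: rest => levelB rest
  | false :: false :: true :: rest => omap S (levelB rest)
  | _ => None
  end.

Definition inB_level (w : word) (l : nat) : bool := levelB w == Some l.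

Definition pow01 (n : nat) : word := flatten (nseq n [:: x0; x1]).

Definition cc (r a b : nat) : rat :=
  2 * (-1) ^+ r *
  ('C(2 * r, 2 * b + 2)%N%:R - (1 - (2%:R ^- (2 * r)%N)) * 'C(2 * r, 2 * a + 1)%N%:R).

(* phi on words: the prescribed values on the basis words of B^1,
   and 0 on all other words. *)
Definition phi (w : word) : rat :=
  \sum_(a < (size w).+1) \sum_(b < (size w).+1)
     (w == pow01 a ++ [:: x0; x0; x1] ++ pow01 b)%:R * cc (a + b + 1)%N a b
  + \sum_(n < (size w).+1) (w == pow01 n ++ [:: x0])%:R * (2 * (-1) ^+ n).

Definition phiI (a : bool) (f : word) (b : bool) : rat :=
  if (a == x1) && (b == x0) then phi f
  else if (a == x0) && (b == x1) then (-1) ^+ size f * phi (rev f)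
  else (f == [::])%:R * phi [::].

(* Coefficient of  (phi (x) id)(∂^{(l)}_{2r+1}(w))  on the word u, for w of
   level l: sum over j = 0 .. N-2r-1 (N = size w), with eps_0 = x1,
   eps_{N+1} = x0, keeping only summands whose right factor has level l-1. *)
Definition dcoef (l r : nat) (w u : word) : rat :=
  let N := size w in
  let e := x1 :: w ++ [:: x0] in
  \sum_(j < N.+1 | (j + 2 * r + 1 <= N)%N)
    let rf := take j w ++ drop (j + 2 * r + 1)%N w in
    ((rf == u) && inB_level rf l.-1)%:R *
    phiI (nth x0 e j) (take (2 * r + 1)%N (drop j w)) (nth x0 e (j + 2 * r + 2)%N).

Definition in_gr (N l : nat) (v : word -> rat) : Prop :=
  forall w, v w != 0 -> size w = N /\ inB_level w l.

Definition in_target (N l : nat) (g : nat -> word -> rat) : Prop :=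
  forall r u, g r u != 0 ->
    [/\ 1 <= r, 2 * r + 1 <= N, size u = N - (2 * r + 1) & inB_level u l.-1]%N.

Definition dphi (N l : nat) (v : word -> rat) : nat -> word -> rat :=
  fun r u => if ((1 <= r) && (2 * r + 1 <= N))%N then
               \sum_(t : N.-tuple bool) v t * dcoef l r t u
             else 0.

(* f is a bijection from the subspace P onto the subspace Q
   (f is linear by construction) *)
Definition bij_on {A B : Type} (P : A -> Prop) (Q : B -> Prop) (f : A -> B) : Prop :=
  [/\ forall v, P v -> Q (f v),
      forall v1 v2, P v1 -> P v2 -> f v1 = f v2 -> v1 = v2
    & forall g, Q g -> exists2 v, P v & f v = g].

(* A word of B of level l >= 1 factors uniquely as (x0x1)^(r-1) x0x0x1 u with u of level
   l-1; matching it with the coordinate (r, u) of the target turns the map into a square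
   matrix.  Scale the (r, u)-coordinate by 2^(2r-2)/r.  All entries then have odd
   denominator, the d-part of phi only contributes even terms, and the remaining summands
   of the (r, u)-coefficient of a word w' cancel in pairs modulo 2: the factor starting at
   position j+1 bracketed by x1...x0 against the one starting at j bracketed by x0...x1,
   which leave the same remainder and are rotations (x0x1)^x x0x0x1 (x0x1)^y and
   (x1x0)^y x1x0x0 (x1x0)^x of each other, contributing c^r_(x,y) and -c^r_(y,x).  Only
   the factor at the start of w' survives; hence, when w' begins with at least r-1 blocks
   x0x1, the entry is congruent to [w' = (x0x1)^(r-1) x0x0x1 u], the diagonal value
   2^(2r-2)/r * c^r_(r-1,0) being odd.  By induction on the number of leading blocks, an
   integral kernel vector has even entries; halving repeatedly, it vanishes. *)

From mathcomp Require Import all_boot all_order all_algebra.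
From mathcomp Require Import ring lra zify.
From Stdlib Require Import FunctionalExtensionality.
Set Implicit Arguments. Unset Strict Implicit. Unset Printing Implicit Defensive.
Import Order.TTheory GRing.Theory Num.Theory.

(** * Words of B *)

Definition cword (a b : nat) : word := pow01 a ++ [:: x0; x0; x1] ++ pow01 b.

Fixpoint lead01 (w : word) : nat := if w is false :: true :: t then (lead01 t).+1 else 0.

Lemma size_pow01 n : size (pow01 n) = 2 * n.
Proof. by elim: n => //= n ->; lia. Qed.

Lemma size_cword a b : size (cword a b) = 2 * a + 2 * b + 3.
Proof. by rewrite !size_cat !size_pow01 /=; lia. Qed.

Lemma lead01_cword a b u : lead01 (cword a b ++ u) = a.
Proof. by elim: a => //= a ->. Qed.

Lemma cword_inj a b x y : cword a b = cword x y -> a = x /\ b = y.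
Proof.
move=> E; have a_x : a = x by rewrite -(lead01_cword a b [::]) -(lead01_cword x y [::]) !cats0 E.
by split => //; move/(congr1 size): E; rewrite !size_cword a_x; lia.
Qed.

Lemma last_cword a b z : last z (cword a b) = x1.
Proof. by rewrite !last_cat /=; elim: b. Qed.

Lemma rev_pow01S n : rev (pow01 n.+1) = [:: x1; x0] ++ rev (pow01 n).
Proof.
have -> : pow01 n.+1 = pow01 n ++ [:: x0; x1] by elim: n => //= n <-.
by rewrite rev_cat.
Qed.

Lemma cons1_pow01 n : x1 :: pow01 n = rcons (rev (pow01 n)) x1.
Proof. by elim: n => // n IH; rewrite rev_pow01S /= -IH. Qed.

Lemma cword_rot x y : x1 :: cword x y = rcons (rev (cword y x)) x1.
Proof.
rewrite /cword -cat_cons cons1_pow01 -cats1 !rev_cat -!catA /=.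
by rewrite rcons_cat /= -cons1_pow01.
Qed.

Lemma levelB_ind (P : word -> nat -> Prop) :
  P [::] 0 ->
  (forall w l, levelB w = Some l -> P w l -> P [:: x0, x1 & w] l) ->
  (forall w l, levelB w = Some l -> P w l -> P [:: x0, x0, x1 & w] l.+1) ->
  forall w l, levelB w = Some l -> P w l.
Proof.
move=> P_nil P01 P001 w; elim: {w}(size w) {-2}w (leqnn (size w)) => [|n IH] w.
  by case: w => //= _ l [<-].
case: w => [|[] w] /=; [by move=> _ l [<-] | by [] |].
case: w => [|[] w] //=.
  by move=> w_n l w_l; apply: P01 w_l (IH _ _ _ w_l); lia.
case: w => [|[] w] //= w_n l; case w_l: (levelB w) => [l'|] //= [<-].
by apply: P001 w_l (IH _ _ _ w_l); lia.
Qed.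

Lemma levelB_head w l : levelB w = Some l -> nth x0 w 0 = x0.
Proof. by case: w => [|[] w]. Qed.

Lemma levelB_x1 w l i : levelB w = Some l -> nth x0 w i = x1 ->
  [/\ (0 < i)%N, nth x0 w i.-1 = x0 & nth x0 w i.+1 = x0].
Proof.
move=> w_l; move: w l w_l i; apply: levelB_ind => [|w l w_l IH|w l w_l IH] i.
- by rewrite nth_nil.
- case: i => [|[|i]] //= w_i; first by rewrite (levelB_head w_l).
  by have [i_gt0 prev next] := IH _ w_i; case: i i_gt0 prev w_i next.
- case: i => [|[|[|i]]] //= w_i; first by rewrite (levelB_head w_l).
  by have [i_gt0 prev next] := IH _ w_i; case: i i_gt0 prev w_i next.
Qed.

Lemma levelB_cword0 a u : levelB (cword a 0 ++ u) = omap S (levelB u).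
Proof. by elim: a. Qed.

Lemma levelB_cword0_decomp w l : levelB w = Some l -> (0 < l)%N ->
  exists2 u, w = cword (lead01 w) 0 ++ u & levelB u = Some l.-1.
Proof.
move: w l; apply: levelB_ind => [|w l w_l IH|w l w_l _] // l_gt0.
  by have [u w_eq u_l] := IH l_gt0; exists u => //=; rewrite {1}w_eq.
by exists w.
Qed.

(** * Two-adic parities *)

Local Open Scope ring_scope.

(* [mod2 x b]: x has odd denominator and x = b modulo 2 in Z_(2). *)
Definition mod2 (x : rat) (b : bool) : Prop :=
  exists m e : int, x * (2 * e + 1)%:~R = (b%:Z + 2 * m)%:~R.

Lemma mod2_uniq x b1 b2 : mod2 x b1 -> mod2 x b2 -> b1 = b2.
Proof.
case=> m1 [e1 E1] [m2 [e2 E2]].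
have : (b1%:Z + 2 * m1) * (2 * e2 + 1) = (b2%:Z + 2 * m2) * (2 * e1 + 1).
  by apply: (@intr_inj rat); rewrite !rmorphM /= -E1 -E2; ring.
by clear E1 E2; case: b1; case: b2 => //=; lia.
Qed.

Lemma mod2_intE (b : bool) (m : int) : mod2 (b%:Z + 2 * m)%:~R b.
Proof. by exists m, 0; rewrite mulr0 add0r mulr1. Qed.

Lemma mod2_0 : mod2 0 false.
Proof. by have := mod2_intE false 0; rewrite mulr0. Qed.

Lemma mod2_nat n : mod2 n%:R (odd n).
Proof.
have -> : n%:R = ((odd n)%:Z + 2 * (n./2)%:Z)%:~R :> rat.
  by rewrite pmulrn; congr (1 *~ _); have := odd_double_half n; lia.
exact: mod2_intE.
Qed.

Lemma mod2_bool (b : bool) : mod2 b%:R b.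
Proof. by have := mod2_nat b; rewrite oddb. Qed.

Lemma mod2D x y b1 b2 : mod2 x b1 -> mod2 y b2 -> mod2 (x + y) (b1 (+) b2).
Proof.
case=> m1 [e1 E1] [m2 [e2 E2]].
exists (b1%:Z * e2 + m1 * (2 * e2 + 1) + b2%:Z * e1 + m2 * (2 * e1 + 1) + (b1 && b2)%:Z).
exists (2 * e1 * e2 + e1 + e2).
have -> : (x + y) * (2 * (2 * e1 * e2 + e1 + e2) + 1)%:~R =
    x * (2 * e1 + 1)%:~R * (2 * e2 + 1)%:~R + y * (2 * e2 + 1)%:~R * (2 * e1 + 1)%:~R.
  by ring.
rewrite {}E1 {}E2 -!intrM -intrD; apply: (congr1 (fun m : int => m%:~R)).
by case: b1; case: b2 => /=; ring.
Qed.

Lemma mod2M x y b1 b2 : mod2 x b1 -> mod2 y b2 -> mod2 (x * y) (b1 && b2).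
Proof.
case=> m1 [e1 E1] [m2 [e2 E2]].
exists (b1%:Z * m2 + m1 * b2%:Z + 2 * m1 * m2), (2 * e1 * e2 + e1 + e2).
have -> : x * y * (2 * (2 * e1 * e2 + e1 + e2) + 1)%:~R =
    x * (2 * e1 + 1)%:~R * (y * (2 * e2 + 1)%:~R) by ring.
rewrite {}E1 {}E2 -intrM; apply: (congr1 (fun m : int => m%:~R)).
by case: b1; case: b2 => /=; ring.
Qed.

Lemma mod2M_even x y b : mod2 x b -> mod2 y false -> mod2 (x * y) false.
Proof. by move=> hx hy; have := mod2M hx hy; rewrite andbF. Qed.

Lemma mod2N x b : mod2 x b -> mod2 (- x) b.
Proof.
case=> m [e E]; exists (- m - b%:Z), e.
rewrite mulNr {}E -intrN; apply: (congr1 (fun m : int => m%:~R)).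
by case: b => /=; ring.
Qed.

Lemma mod2B x y b1 b2 : mod2 x b1 -> mod2 y b2 -> mod2 (x - y) (b1 (+) b2).
Proof. by move=> hx /mod2N; apply: mod2D. Qed.

Lemma mod2_sign n : mod2 ((-1) ^+ n) true.
Proof.
by elim: n => [|n IH]; [rewrite expr0; exact: (mod2_nat 1) | rewrite exprS mulN1r; apply: mod2N].
Qed.

Lemma mod2_int (m : int) : mod2 m%:~R (odd `|m|).
Proof.
case: m => n; first exact: mod2_nat.
by rewrite NegzE intrN; apply: mod2N; apply: mod2_nat.
Qed.

Lemma mod2_divodd (e : int) x b : mod2 x b -> mod2 (x / (2 * e + 1)%:~R) b.
Proof.
case=> m [e1 E]; exists m, (2 * e * e1 + e + e1).
have nz : (2 * e + 1)%:~R != 0 :> rat by rewrite intr_eq0; lia.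
rewrite -E (_ : 2 * (2 * e * e1 + e + e1) + 1 = (2 * e + 1) * (2 * e1 + 1)); last by ring.
by rewrite intrM mulrA divfK.
Qed.

Lemma mod2_sum_even (I : Type) (s : seq I) (P : pred I) (F : I -> rat) :
  (forall i, P i -> mod2 (F i) false) -> mod2 (\sum_(i <- s | P i) F i) false.
Proof.
by move=> even_F; elim/big_rec: _ => [|i x Pi]; [exact: mod2_0 | exact: mod2D (even_F i Pi)].
Qed.

Lemma mod2_pow2_divn m n : (0 < n)%N -> (logn 2 n < m)%N -> mod2 (2 ^+ m / n%:R) false.
Proof.
move=> n_gt0 log_lt; have [d d_odd n_eq] := pfactor_coprime (isT : prime 2) n_gt0.
rewrite coprime2n in d_odd; set k := logn 2 n in n_eq log_lt *.
have -> : 2 ^+ m / n%:R = (2 ^ (m - k))%:R / (2 * (d./2)%:Z + 1)%:~R :> rat.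
  have -> : (2 * (d./2)%:Z + 1)%:~R = d%:R :> rat.
    have -> : 2 * (d./2)%:Z + 1 = d%:Z by have := odd_double_half d; rewrite d_odd; lia.
    by rewrite -pmulrn.
  rewrite n_eq natrM !natrX -{1}(subnK (ltnW log_lt)) exprD.
  have : 2 ^+ k != 0 :> rat by rewrite expf_neq0.
  have : d%:R != 0 :> rat by rewrite pnatr_eq0; case: (d) d_odd.
  by move=> d0 p0; field; rewrite d0 p0.
apply: (mod2_divodd (d./2)%:Z); have := mod2_nat (2 ^ (m - k)).
by rewrite oddX subn_eq0 leqNgt log_lt.
Qed.

(** * The normalised coefficients *)

(* The scaling of the r-th target component: it makes every coefficient of the r-th
   component 2-integral and the diagonal one odd. *)
Definition cscale (r : nat) : rat := 2 ^+ (2 * r - 2) / r%:R.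

Lemma cscale_cc r a b : (0 < r)%N -> cscale r * cc r a b =
  2 ^+ (2 * r - 1) / r%:R * ((-1) ^+ r * ('C(2 * r, 2 * b + 2)%:R - 'C(2 * r, 2 * a + 1)%:R))
  + (-1) ^+ r * ('C(2 * r, 2 * a + 1)%:R / (2 * r)%:R).
Proof.
move=> r_gt0; rewrite /cscale /cc.
have -> : 2 ^+ (2 * r - 1) = 2 * 2 ^+ (2 * r - 2) :> rat by rewrite -exprS; congr (_ ^+ _); lia.
have -> : 2%:R ^- (2 * r) = (4 * 2 ^+ (2 * r - 2))^-1 :> rat.
  by rewrite -[4]/(2 ^+ 2 : rat) -exprD; congr (_ ^+ _)^-1; lia.
have : 2 ^+ (2 * r - 2) != 0 :> rat by rewrite expf_neq0.
have : r%:R != 0 :> rat by rewrite pnatr_eq0 -lt0n.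
by move=> r0 p0; rewrite natrM; field; rewrite r0 p0.
Qed.

Lemma mod2_binom_div r a : (0 < r)%N ->
  mod2 ('C(2 * r, 2 * a + 1)%:R / (2 * r)%:R) (odd 'C(2 * r - 1, 2 * a)).
Proof.
move=> r_gt0; have := mul_bin_diag (2 * r) (2 * a).
rewrite -subn1 addn1 => bin_eq.
have -> : 'C(2 * r, (2 * a).+1)%:R / (2 * r)%:R = 'C(2 * r - 1, 2 * a)%:R / ((2 * a).+1)%:R :> rat.
  apply/eqP; rewrite eqr_div ?pnatr_eq0 ?muln_eq0 -?lt0n ?r_gt0 //.
  by rewrite -!natrM mulnC -bin_eq mulnC.
have -> : ((2 * a).+1)%:R = (2 * a%:Z + 1)%:~R :> rat.
  by rewrite pmulrn; congr (1 *~ _); lia.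
by apply: mod2_divodd; apply: mod2_nat.
Qed.

Lemma mod2_cscale_cc r a b : (0 < r)%N -> mod2 (cscale r * cc r a b) (odd 'C(2 * r - 1, 2 * a)).
Proof.
move=> r_gt0; rewrite cscale_cc //.
apply: (mod2D (b1 := false)); last by apply: mod2M (mod2_sign r) (mod2_binom_div a r_gt0).
apply: mod2M (mod2_pow2_divn r_gt0 _) _; first by have := ltn_logl 2 r_gt0; lia.
by apply: mod2M (mod2_sign r) (mod2B (mod2_nat _) (mod2_nat _)).
Qed.

Lemma mod2_cscale_cc_diag r : (0 < r)%N -> mod2 (cscale r * cc r r.-1 0) true.
Proof.
move=> r_gt0; have := mod2_cscale_cc r.-1 0 r_gt0.
have -> : (2 * r - 1 = (2 * r.-1).+1)%N by lia.
by rewrite binSn /= oddM.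
Qed.

Lemma mod2_cscale_cc_antisym r x y : (x + y + 1 = r)%N ->
  mod2 (cscale r * (cc r x y - cc r y x)) false.
Proof.
move=> r_eq; have r_gt0 : (0 < r)%N by lia.
rewrite mulrBr !cscale_cc //.
have -> : 'C(2 * r, 2 * y + 1) = 'C(2 * r, 2 * x + 1).
  by rewrite -bin_sub; [congr 'C(_, _) | ]; lia.
set E := 2 ^+ _ / _; set s := (-1) ^+ r.
have -> : forall c1 c2 c3 d : rat,
    E * (s * (c1 - c3)) + s * d - (E * (s * (c2 - c3)) + s * d) = E * (s * (c1 - c2)).
  by move=> *; ring.
apply: mod2M (mod2_pow2_divn r_gt0 _) _; first by have := ltn_logl 2 r_gt0; lia.
by apply: mod2M (mod2_sign r) (mod2B (mod2_nat _) (mod2_nat _)).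
Qed.

Lemma mod2_cscale_even_sign r n : (0 < r)%N -> mod2 (cscale r * (2 * (-1) ^+ n)) false.
Proof.
move=> r_gt0; have -> : cscale r * (2 * (-1) ^+ n) = 2 ^+ (2 * r - 1) / r%:R * (-1) ^+ n.
  rewrite /cscale (_ : 2 * r - 1 = (2 * r - 2).+1)%N ?exprS; first by ring.
  by lia.
apply: mod2M (mod2_pow2_divn r_gt0 _) (mod2_sign n).
by have := ltn_logl 2 r_gt0; lia.
Qed.

Definition phi_c (w : word) : rat :=
  \sum_(a < (size w).+1) \sum_(b < (size w).+1) (w == cword a b)%:R * cc (a + b + 1) a b.

Definition phi_d (w : word) : rat :=
  \sum_(n < (size w).+1) (w == pow01 n ++ [:: x0])%:R * (2 * (-1) ^+ n).

Lemma phiE w : phi w = phi_c w + phi_d w.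
Proof. by []. Qed.

Lemma sum_ord_delta (R : pzSemiRingType) n x (x_lt : (x < n)%N) (F : 'I_n -> R) :
  \sum_(i < n) (i == x :> nat)%:R * F i = F (Ordinal x_lt).
Proof.
rewrite (bigD1 (Ordinal x_lt)) //= eqxx mul1r big1 ?addr0 // => i.
by rewrite -val_eqE /= => /negbTE ->; rewrite mul0r.
Qed.

Lemma phi_c_cword x y : phi_c (cword x y) = cc (x + y + 1) x y.
Proof.
have cword_eq a b : (cword x y == cword a b) = (a == x) && (b == y).
  by apply/eqP/andP => [/cword_inj[-> ->]|[/eqP-> /eqP->]].
rewrite /phi_c; under eq_bigr => a _ do
  under eq_bigr => b _ do rewrite cword_eq -mulnb natrM -mulrA.
under eq_bigr => a _ do rewrite -mulr_sumr.
have x_lt : (x < (size (cword x y)).+1)%N by rewrite size_cword; lia.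
have y_lt : (y < (size (cword x y)).+1)%N by rewrite size_cword; lia.
by rewrite (sum_ord_delta x_lt) (sum_ord_delta y_lt).
Qed.

Lemma phi_cP w : phi_c w = 0 \/ exists a b, w = cword a b.
Proof.
have [/existsP[a /existsP[b /eqP->]]|] :=
  boolP [exists a : 'I_(size w).+1, exists b : 'I_(size w).+1, w == cword a b].
  by right; exists a, b.
rewrite negb_exists => /forallP no_cword; left.
rewrite /phi_c big1 // => a _; rewrite big1 // => b _.
by have /existsPn/(_ b)/negbTE-> := no_cword a; rewrite mul0r.
Qed.

Lemma phi_c_rcons0 m : phi_c (rcons m x0) = 0.
Proof.
have [//|[a [b ab_eq]]] := phi_cP (rcons m x0).
by have := last_cword a b x0; rewrite -ab_eq last_rcons.
Qed.

Lemma mod2_cscale_phi_d r w : (0 < r)%N -> mod2 (cscale r * phi_d w) false.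
Proof.
move=> r_gt0; rewrite mulr_sumr; apply: mod2_sum_even => n _.
by rewrite mulrCA; apply: mod2M_even (mod2_bool _) (mod2_cscale_even_sign _ r_gt0).
Qed.

Lemma phi_nil : phi [::] = 0.
Proof.
rewrite phiE; have [->|[a [b /(congr1 size)]]] := phi_cP [::]; last by rewrite size_cword addn3.
by rewrite /phi_d big_ord1 mul0r addr0.
Qed.

Lemma mod2_cscale_rot r m : size m = (2 * r)%N ->
  mod2 (cscale r * (phi_c (rcons m x1) - phi_c (rev (x1 :: m)))) false.
Proof.
move=> size_m.
have [[x [y cword_m]] | [-> ->]] : (exists x y, rcons m x1 = cword x y) \/
    (phi_c (rcons m x1) = 0 /\ phi_c (rev (x1 :: m)) = 0).
- have [rev_m0|[a [b rev_m]]] := phi_cP (rev (x1 :: m)); last first.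
    by left; exists b, a; have := cword_rot b a; rewrite -rev_m revK /= => -[->].
  have [?|[x [y ?]]] := phi_cP (rcons m x1); [by right | by left; exists x, y].
- have rev_m : rev (x1 :: m) = cword y x.
    have := cword_rot x y; rewrite -cword_m -rcons_cons => /rcons_inj[m_eq].
    by rewrite m_eq revK.
  have r_eq : (x + y + 1 = r)%N.
    by move/(congr1 size): cword_m; rewrite size_rcons size_m size_cword; lia.
  rewrite cword_m rev_m !phi_c_cword r_eq (_ : y + x + 1 = r)%N; last by lia.
  exact: mod2_cscale_cc_antisym.
- by rewrite subrr mulr0; exact: mod2_0.
Qed.

Definition phiI_c (a : bool) (f : word) (b : bool) : rat :=
  if (a == x1) && (b == x0) then phi_c f
  else if (a == x0) && (b == x1) then (-1) ^+ size f * phi_c (rev f) else 0.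

Lemma mod2_cscale_phiI r a f b : (0 < r)%N ->
  mod2 (cscale r * (phiI a f b - phiI_c a f b)) false.
Proof.
move=> r_gt0; rewrite /phiI /phiI_c; case: a; case: b => /=.
- by rewrite phi_nil !(mulr0, subr0); exact: mod2_0.
- by rewrite phiE (_ : _ - _ = phi_d f); [exact: mod2_cscale_phi_d | ring].
- rewrite phiE (_ : _ - _ = (-1) ^+ size f * phi_d (rev f)); last by ring.
  rewrite mulrCA.
  exact: mod2M_even (mod2_sign _) (mod2_cscale_phi_d _ r_gt0).
- by rewrite phi_nil !(mulr0, subr0); exact: mod2_0.
Qed.

(** * The coefficients of the differential modulo 2 *)

(* [eps t j] is the letter eps_j of x1 t x0, where t = eps_1 ... eps_N. *)
Definition eps (t : word) (j : nat) : bool := nth x0 (x1 :: t ++ [:: x0]) j.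
Definition seg (t : word) (r j : nat) : word := take (2 * r + 1) (drop j t).
Definition excise (t : word) (r j : nat) : word := take j t ++ drop (j + 2 * r + 1) t.

Lemma epsS t j : eps t j.+1 = nth x0 t j.
Proof.
rewrite /eps /= nth_cat; case: ltnP => // le_t.
by rewrite (nth_default _ le_t); case: (_ - _)%N => //= n; rewrite nth_nil.
Qed.

Lemma size_seg t r j : (j + 2 * r + 1 <= size t)%N -> size (seg t r j) = (2 * r + 1)%N.
Proof. by move=> j_le; rewrite size_takel // size_drop; lia. Qed.

Lemma seg_cons t r i : (i < size t)%N -> seg t r i = nth x0 t i :: take (2 * r) (drop i.+1 t).
Proof. by move=> i_lt; rewrite /seg (drop_nth x0 i_lt) addn1. Qed.

Lemma seg_rcons t r i : (i + 2 * r + 1 < size t)%N ->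
  seg t r i.+1 = rcons (take (2 * r) (drop i.+1 t)) (nth x0 t (i + 2 * r + 1)).
Proof.
move=> i_lt; rewrite /seg addn1 (take_nth x0) ?size_drop; last by lia.
by rewrite nth_drop; congr (rcons _ (nth _ _ _)); lia.
Qed.

Lemma excise_shift t r i : (i + 2 * r + 1 < size t)%N ->
  nth x0 t i = nth x0 t (i + 2 * r + 1) -> excise t r i = excise t r i.+1.
Proof.
move=> i_lt t_eq; rewrite /excise (take_nth x0); last by lia.
by rewrite (drop_nth x0 i_lt) t_eq cat_rcons; do 3 f_equal; lia.
Qed.

Lemma sum_pair_shift (V : nmodType) K (a b : nat -> V) :
  \sum_(j < K.+1) (a j + b j) = a 0%N + \sum_(i < K) (a i.+1 + b i) + b K.
Proof. by rewrite !big_split big_ord_recl big_ord_recr /= -!addrA. Qed.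

Section LocalCoefficients.
Variables (l r : nat) (t u : word).
Hypothesis r_gt0 : (0 < r)%N.

Let hit j : rat := ((excise t r j == u) && inB_level (excise t r j) l.-1)%:R.
Let A j := hit j *
  (if (eps t j == x1) && (eps t (j + 2 * r + 2) == x0) then phi_c (seg t r j) else 0).
Let B j := hit j * (if (eps t j == x0) && (eps t (j + 2 * r + 2) == x1)
  then (-1) ^+ size (seg t r j) * phi_c (rev (seg t r j)) else 0).

Lemma dcoefE : (2 * r + 1 <= size t)%N -> dcoef l r t u =
  \sum_(j < (size t - (2 * r + 1)).+1) hit j * phiI (eps t j) (seg t r j) (eps t (j + 2 * r + 2)).
Proof.
move=> r_le; rewrite /dcoef (big_ord_widen (size t).+1
  (fun j => hit j * phiI (eps t j) (seg t r j) (eps t (j + 2 * r + 2)))); last by lia.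
by apply: eq_big => [j|//]; lia.
Qed.

Lemma hit_phiI_c j :
  hit j * phiI_c (eps t j) (seg t r j) (eps t (j + 2 * r + 2)) = A j + B j.
Proof.
by rewrite /A /B /phiI_c; case: (eps t j); case: (eps t _); rewrite /= ?mulr0 ?addr0 ?add0r.
Qed.

Lemma B_last : (2 * r + 1 <= size t)%N -> B (size t - (2 * r + 1)) = 0.
Proof.
move=> r_le; rewrite /B (_ : size t - _ + _ + 2 = (size t).+1)%N; last by lia.
by rewrite epsS nth_default // andbF mulr0.
Qed.

(* The factors at i and i+1 share their 2r middle letters.  Both summands vanish unless
   t_i = t_(i+2r+1) = x1, and then the remainders coincide and the factors are rotations
   of each other. *)
Lemma mod2_cscale_pair lv i : levelB t = Some lv -> (i + 2 * r + 1 < size t)%N ->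
  mod2 (cscale r * (A i.+1 + B i)) false.
Proof.
move=> t_lv i_lt; set m := take (2 * r) (drop i.+1 t).
have size_m : size m = (2 * r)%N by rewrite size_takel // size_drop; lia.
have eps_A : eps t (i.+1 + 2 * r + 2) = nth x0 t (i + 2 * r + 2).
  by rewrite -epsS; congr (eps t _); lia.
have eps_B : eps t (i + 2 * r + 2) = nth x0 t (i + 2 * r + 1).
  by rewrite -epsS; congr (eps t _); lia.
rewrite /A /B eps_A eps_B epsS seg_rcons // seg_cons -/m; last by lia.
case t_i: (nth x0 t i); last first.
  by rewrite /= rev_cons phi_c_rcons0 !(mulr0, if_same, add0r); exact: mod2_0.
case t_j: (nth x0 t (i + 2 * r + 1)); last first.
  by rewrite phi_c_rcons0 andbF !(mulr0, if_same, addr0); exact: mod2_0.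
have [i_gt0 t_prev _] := levelB_x1 t_lv t_i.
have [_ _ t_next] := levelB_x1 t_lv t_j.
have eps_i : eps t i = x0 by rewrite -(prednK i_gt0) epsS.
rewrite eps_i (_ : (i + 2 * r + 2 = (i + 2 * r + 1).+1)%N) ?t_next; last by lia.
have -> : hit i = hit i.+1 by rewrite /hit excise_shift // t_i t_j.
rewrite /= size_m -signr_odd /= oddM /= expr1 !mulN1r mulrN -mulrBr mulrCA.
exact: mod2M_even (mod2_bool _) (mod2_cscale_rot size_m).
Qed.

Lemma mod2_cscale_dcoef_A0 lv : levelB t = Some lv -> (2 * r + 1 <= size t)%N ->
  mod2 (cscale r * dcoef l r t u - cscale r * A 0) false.
Proof.
move=> t_lv r_le; rewrite dcoefE //; set K := (size t - (2 * r + 1))%N.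
set G := fun j => phiI (eps t j) (seg t r j) (eps t (j + 2 * r + 2)).
set Gc := fun j => phiI_c (eps t j) (seg t r j) (eps t (j + 2 * r + 2)).
have -> : \sum_(j < K.+1) hit j * G j =
    \sum_(j < K.+1) (A j + B j) + \sum_(j < K.+1) hit j * (G j - Gc j).
  by rewrite -big_split; apply: eq_bigr => j _; rewrite -hit_phiI_c /G /Gc /=; ring.
rewrite sum_pair_shift B_last // addr0 -addrA mulrDr addrAC subrr add0r mulrDr !mulr_sumr.
apply: (mod2D (b1 := false)); apply: mod2_sum_even => i _.
  by apply: mod2_cscale_pair t_lv _; case: i => /= i; rewrite /K; lia.
by rewrite mulrCA; apply: mod2M_even (mod2_bool _) (mod2_cscale_phiI _ _ _ r_gt0).
Qed.

Lemma mod2_cscale_A0 : (2 * r + 1 <= size t)%N -> exists b, mod2 (cscale r * A 0) b.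
Proof.
move=> r_le; rewrite /A; have [->|[x [y seg_eq]]] := phi_cP (seg t r 0).
  by exists false; rewrite if_same !mulr0; exact: mod2_0.
have r_eq : (x + y + 1 = r)%N.
  by move/(congr1 size): seg_eq; rewrite size_seg // size_cword; lia.
rewrite seg_eq phi_c_cword r_eq; case: ifP => _; last first.
  by exists false; rewrite !mulr0; exact: mod2_0.
by eexists; rewrite mulrCA; apply: mod2M (mod2_bool _) (mod2_cscale_cc _ _ r_gt0).
Qed.

Lemma mod2_cscale_A0_lead : (2 * r + 1 <= size t)%N -> (r.-1 <= lead01 t)%N ->
  levelB u = Some l.-1 -> mod2 (cscale r * A 0) (t == cword r.-1 0 ++ u).
Proof.
move=> r_le lead_ge u_l.
have size_c : size (cword r.-1 0) = (2 * r + 1)%N by rewrite size_cword; lia.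
have [t_eq|t_neq] := eqVneq t (cword r.-1 0 ++ u).
  have seg_eq : seg t r 0 = cword r.-1 0 by rewrite /seg drop0 t_eq -size_c take_size_cat.
  have exc_eq : excise t r 0 = u by rewrite /excise take0 t_eq /= add0n -size_c drop_size_cat.
  have eps_eq : eps t (0 + 2 * r + 2) = x0.
    rewrite (_ : 0 + _ + 2 = (2 * r + 1).+1)%N ?epsS; last by lia.
    by rewrite t_eq nth_cat size_c ltnn subnn (levelB_head u_l).
  rewrite /A /hit seg_eq exc_eq eps_eq /inB_level u_l !eqxx /= mul1r phi_c_cword.
  by rewrite (_ : r.-1 + 0 + 1 = r)%N; [exact: mod2_cscale_cc_diag | lia].
suff -> : A 0 = 0 by rewrite mulr0; exact: mod2_0.
rewrite /A /hit; have [->|[x [y seg_eq]]] := phi_cP (seg t r 0); first by rewrite if_same mulr0.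
have [exc_eq|_] := eqVneq (excise t r 0) u; last by rewrite mul0r.
have t_eq : t = cword x y ++ u.
  by rewrite -seg_eq -exc_eq /seg /excise drop0 take0 add0n cat_take_drop.
have r_eq : (x + y + 1 = r)%N.
  by move/(congr1 size): seg_eq; rewrite size_seg // size_cword; lia.
move: lead_ge; rewrite t_eq lead01_cword => x_ge.
have [x_eq y_eq] : x = r.-1 /\ y = 0%N by lia.
by move: t_neq; rewrite t_eq x_eq y_eq eqxx.
Qed.

Lemma mod2_cscale_dcoef lv : levelB t = Some lv -> (2 * r + 1 <= size t)%N ->
  exists b, mod2 (cscale r * dcoef l r t u) b.
Proof.
move=> t_lv r_le; have [b A0_b] := mod2_cscale_A0 r_le.
exists b; rewrite -(subrK (cscale r * A 0) (cscale r * dcoef l r t u)).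
exact: mod2D (mod2_cscale_dcoef_A0 t_lv r_le) A0_b.
Qed.

Lemma mod2_cscale_dcoef_lead lv : levelB t = Some lv -> (2 * r + 1 <= size t)%N ->
  (r.-1 <= lead01 t)%N -> levelB u = Some l.-1 ->
  mod2 (cscale r * dcoef l r t u) (t == cword r.-1 0 ++ u).
Proof.
move=> t_lv r_le lead_ge u_l; rewrite -(subrK (cscale r * A 0) (cscale r * dcoef l r t u)).
exact: mod2D (mod2_cscale_dcoef_A0 t_lv r_le) (mod2_cscale_A0_lead r_le lead_ge u_l).
Qed.

End LocalCoefficients.

(** * The kernel *)

Lemma tuple_of_size N (w : word) : size w = N -> exists t : N.-tuple bool, w = t.
Proof. by move=> size_w; exists (Tuple (introT eqP size_w)). Qed.

Definition in_ker (N l : nat) (v : word -> rat) : Prop :=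
  in_gr N l v /\ forall r u, dphi N l v r u = 0.

Lemma dphiZ N l c v r u : dphi N l (fun w => c * v w) r u = c * dphi N l v r u.
Proof.
rewrite /dphi; case: ifP => _; last by rewrite mulr0.
by rewrite mulr_sumr; apply: eq_bigr => t _; rewrite mulrA.
Qed.

Lemma dphiB N l v1 v2 r u :
  dphi N l (fun w => v1 w - v2 w) r u = dphi N l v1 r u - dphi N l v2 r u.
Proof.
rewrite /dphi; case: ifP => _; last by rewrite subr0.
by rewrite -sumrB; apply: eq_bigr => t _; rewrite mulrBl.
Qed.

Lemma in_grZ N l c v : in_gr N l v -> in_gr N l (fun w => c * v w).
Proof. by move=> v_gr w; rewrite mulf_eq0 negb_or => /andP[_ /v_gr]. Qed.

Lemma in_grB N l v1 v2 : in_gr N l v1 -> in_gr N l v2 -> in_gr N l (fun w => v1 w - v2 w).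
Proof.
move=> v1_gr v2_gr w; have [v1w0|/v1_gr//] := eqVneq (v1 w) 0.
by rewrite v1w0 sub0r oppr_eq0 => /v2_gr.
Qed.

Lemma in_kerZ N l c v : in_ker N l v -> in_ker N l (fun w => c * v w).
Proof. by move=> [v_gr v_ker]; split=> [|r u]; [exact: in_grZ | rewrite dphiZ v_ker mulr0]. Qed.

Lemma int_half x : x \is a Num.int -> mod2 x false -> x / 2 \is a Num.int.
Proof.
case/intrP=> m -> /mod2_uniq/(_ (mod2_int m)) m_odd.
apply/intrP; exists (m %/ 2)%Z.
have /divzK {1}<- : (2 %| m)%Z by rewrite dvdzE dvdn2 -m_odd.
by rewrite intrM; field.
Qed.

Lemma int_pow2_eq0 (x : rat) : x \is a Num.int -> (forall k, x / 2 ^+ k \is a Num.int) -> x = 0.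
Proof.
case/intrP=> m -> /(_ `|m|%N)/intrP[n mn].
have m_eq : m = 2 ^+ `|m| * n.
  by apply: (@intr_inj rat); rewrite rmorphM rmorphXn /= -mn mulrC divfK // expf_neq0.
have [n0|n_neq0] := eqVneq n 0; first by rewrite m_eq n0 mulr0.
have := ltn_expl `|m| (isT : 1 < 2)%N; rewrite {1}m_eq abszM abszX /=.
by rewrite -[X in (_ < X)%N]muln1 ltn_pmul2l ?expn_gt0 // ltnNge absz_gt0 n_neq0.
Qed.

Section Kernel.
Variables (N l : nat).
Hypothesis l_gt0 : (0 < l)%N.

(* In the (r, u)-equation of w = cword (r-1) 0 ++ u, the words with fewer leading blocks
   have even coefficients by induction, and all others but w have even entries. *)
Lemma in_ker_even v : in_ker N l v -> (forall w, exists b, mod2 (v w) b) ->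
  forall w, mod2 (v w) false.
Proof.
move=> [v_gr v_ker] v_loc.
suff even_lead n w : lead01 w = n -> mod2 (v w) false by move=> w; exact: even_lead.
elim/ltn_ind: n w => n IH w lead_w.
have [->|vw_neq0] := eqVneq (v w) 0; first exact: mod2_0.
have [size_w /eqP w_l] := v_gr w vw_neq0.
have [u w_eq u_l] := levelB_cword0_decomp w_l l_gt0; rewrite lead_w in w_eq.
have r_le : (2 * n.+1 + 1 <= N)%N by rewrite -size_w w_eq size_cat size_cword; lia.
have [tw tw_eq] := tuple_of_size size_w.
have [b vw_b] := v_loc w.
suff : mod2 (cscale n.+1 * dphi N l v n.+1 u) b.
  by rewrite v_ker mulr0 => /(mod2_uniq mod2_0) b_false; rewrite b_false.
rewrite /dphi r_le /= mulr_sumr (bigD1 tw) //= -tw_eq -[b]addbF mulrCA.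
have w_diag : mod2 (cscale n.+1 * dcoef l n.+1 w u) true.
  have := mod2_cscale_dcoef_lead (ltn0Sn n) w_l _ _ u_l.
  by rewrite /= -w_eq eqxx; apply; rewrite ?size_w ?lead_w.
apply: mod2D; first by rewrite -[b]andbT; exact: mod2M vw_b w_diag.
apply: mod2_sum_even => t t_neq; rewrite mulrCA.
have [->|vt_neq0] := eqVneq (v t) 0; first by rewrite mul0r; exact: mod2_0.
have [size_t /eqP t_l] := v_gr t vt_neq0.
have r_le' : (2 * n.+1 + 1 <= size t)%N by rewrite size_t.
have [lt_n|ge_n] := ltnP (lead01 t) n.
  have [c dc] := mod2_cscale_dcoef l u (ltn0Sn n) t_l r_le'.
  exact: mod2M (IH _ lt_n t erefl) dc.
have [c vt_c] := v_loc t; apply: mod2M_even vt_c _.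
have := mod2_cscale_dcoef_lead (ltn0Sn n) t_l r_le' ge_n u_l.
by rewrite /= -w_eq tw_eq val_eqE (negbTE t_neq).
Qed.

Lemma in_ker_pow2 k v : in_ker N l v -> (forall w, v w \is a Num.int) ->
  forall w, v w / 2 ^+ k \is a Num.int.
Proof.
elim: k v => [|k IH] v v_ker v_int w; first by rewrite expr0 divr1.
have half_int w' : 2^-1 * v w' \is a Num.int.
  rewrite mulrC; apply: int_half (v_int w') _; apply: in_ker_even v_ker _ w' => w''.
  by have /intrP[m ->] := v_int w''; exists (odd `|m|); exact: mod2_int.
by have := IH _ (in_kerZ 2^-1 v_ker) half_int w; rewrite exprS invfM mulrCA mulrA.
Qed.

Lemma in_ker_eq0 v : in_ker N l v -> forall w, v w = 0.
Proof.
move=> v_ker w; pose D : rat := \prod_(t : N.-tuple bool) (denq (v t))%:~R.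
have D_neq0 : D != 0 by apply/prodf_neq0 => t _; rewrite intr_eq0 denq_neq0.
have Dv_int w' : D * v w' \is a Num.int.
  have [->|vw_neq0] := eqVneq (v w') 0; first by rewrite mulr0 rpred0.
  have [size_w _] := v_ker.1 w' vw_neq0; have [t ->] := tuple_of_size size_w.
  rewrite /D (bigD1 t) //= mulrAC [_ * v t]mulrC -numqE.
  by rewrite rpredM ?intr_int // rpred_prod // => *; exact: intr_int.
have := int_pow2_eq0 (Dv_int w) (fun k => in_ker_pow2 k (in_kerZ D v_ker) Dv_int w).
by move/eqP; rewrite mulf_eq0 (negbTE D_neq0) => /eqP.
Qed.

Lemma dphi_inj v1 v2 : in_gr N l v1 -> in_gr N l v2 -> dphi N l v1 = dphi N l v2 -> v1 = v2.
Proof.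
move=> v1_gr v2_gr dphi_eq; apply: functional_extensionality => w; apply/eqP.
rewrite -subr_eq0; apply/eqP; apply: (in_ker_eq0 (v := fun w => v1 w - v2 w)).
by split=> [|r u]; [exact: in_grB | rewrite dphiB dphi_eq subrr].
Qed.

End Kernel.

(** * Invertibility *)

Lemma sumr_neq0_ex (V : nmodType) (I : finType) (P : pred I) (F : I -> V) :
  \sum_(i | P i) F i != 0 -> exists2 i, P i & F i != 0.
Proof.
have [/existsP[i /andP[Pi Fi]]|] := boolP [exists i, P i && (F i != 0)]; first by exists i.
rewrite negb_exists => /forallP PF; rewrite big1 ?eqxx // => i Pi.
by apply/eqP; have := PF i; rewrite Pi negbK.
Qed.

Lemma dcoef_supp l r t u : dcoef l r t u != 0 ->
  (size u == size t - (2 * r + 1))%N && inB_level u l.-1.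
Proof.
case/sumr_neq0_ex => j j_le; rewrite mulf_eq0 negb_or pnatr_eq0 eqb0 negbK.
case/andP => /andP[/eqP<- ->] _; rewrite andbT size_cat size_takel ?size_drop; lia.
Qed.

Lemma dphi_in_target N l v : in_target N l (dphi N l v).
Proof.
move=> r u; rewrite /dphi; case: ifP => [/andP[r_ge r_le]|_]; last by rewrite eqxx.
case/sumr_neq0_ex => t _; rewrite mulf_eq0 negb_or => /andP[_ /dcoef_supp].
by case/andP => /eqP size_u u_l; split; rewrite // size_u size_tuple.
Qed.

Lemma sum_tuple_eq N (w : word) (F : word -> rat) : size w = N ->
  \sum_(t : N.-tuple bool) (val t == w)%:R * F t = F w.
Proof.
move=> size_w; have [tw ->] := tuple_of_size size_w.
rewrite (bigD1 tw) //= eqxx mul1r big1 ?addr0 // => t t_neq.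
by rewrite val_eqE (negbTE t_neq) mul0r.
Qed.

(* The target coordinate matched with a word cword (r-1) 0 ++ u of positive level. *)
Definition diag_r (w : word) : nat := (lead01 w).+1.
Definition diag_u (w : word) : word := drop (2 * diag_r w + 1) w.

Lemma diag_cword r u : (0 < r)%N ->
  diag_r (cword r.-1 0 ++ u) = r /\ diag_u (cword r.-1 0 ++ u) = u.
Proof.
move=> r_gt0; have r_eq : diag_r (cword r.-1 0 ++ u) = r by rewrite /diag_r lead01_cword prednK.
by split; rewrite // /diag_u r_eq drop_size_cat // size_cword; lia.
Qed.

Lemma diag_decomp w l : levelB w = Some l -> (0 < l)%N ->
  [/\ w = cword (diag_r w).-1 0 ++ diag_u w, levelB (diag_u w) = Some l.-1
    & (2 * diag_r w + 1 <= size w)%N].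
Proof.
move=> w_l l_gt0; have [u w_eq u_l] := levelB_cword0_decomp w_l l_gt0.
have := diag_cword u (ltn0Sn (lead01 w)); rewrite -w_eq => -[_ ->].
by split; rewrite // {2}w_eq size_cat size_cword /diag_r; lia.
Qed.

Section Surjectivity.
Variables (N l : nat).
Hypothesis l_gt0 : (0 < l)%N.

Let I := {t : N.-tuple bool | inB_level t l}.
Let n := #|{: I}|.
Let basis_word (j : 'I_n) : word := val (val (enum_val j)).

Lemma basis_word_inj : injective basis_word.
Proof. by move=> i j /val_inj/val_inj/enum_val_inj. Qed.

Lemma basis_word_prop j : size (basis_word j) = N /\ levelB (basis_word j) = Some l.
Proof. by rewrite /basis_word; case: (enum_val j) => t /= /eqP; rewrite size_tuple. Qed.

Lemma basis_word_surj w : size w = N -> levelB w = Some l -> exists j, basis_word j = w.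
Proof.
move=> size_w w_l; have [t w_eq] := tuple_of_size size_w.
have t_l : inB_level t l by rewrite /inB_level -w_eq w_l.
by exists (enum_rank (exist _ t t_l : I)); rewrite /basis_word enum_rankK.
Qed.

Let col_r (i : 'I_n) : nat := diag_r (basis_word i).
Let col_u (i : 'I_n) : word := diag_u (basis_word i).

Let of_row (x : 'rV[rat]_n) (w : word) : rat := \sum_(j < n) (w == basis_word j)%:R * x 0 j.

Lemma of_row_basis_word x j : of_row x (basis_word j) = x 0 j.
Proof.
rewrite /of_row (bigD1 j) //= eqxx mul1r big1 ?addr0 // => i i_neq.
by rewrite (inj_eq basis_word_inj) eq_sym (negbTE i_neq) mul0r.
Qed.

Lemma in_gr_of_row x : in_gr N l (of_row x).
Proof.
move=> w /sumr_neq0_ex[j _]; rewrite mulf_eq0 negb_or pnatr_eq0 eqb0 negbK.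
by case/andP => /eqP-> _; have [size_j /eqP] := basis_word_prop j.
Qed.

Let dphi_mx : 'M[rat]_n := \matrix_(j, i) dcoef l (col_r i) (basis_word j) (col_u i).

Lemma mulmx_dphi_mx x i : (x *m dphi_mx) 0 i = dphi N l (of_row x) (col_r i) (col_u i).
Proof.
have [size_i i_l] := basis_word_prop i; have [_ _ r_le] := diag_decomp i_l l_gt0.
rewrite size_i in r_le; rewrite /dphi r_le /= !mxE.
under [RHS]eq_bigr => t _ do rewrite /of_row mulr_suml.
rewrite exchange_big /=; apply: eq_bigr => j _; rewrite mxE.
have [size_j _] := basis_word_prop j.
rewrite -(sum_tuple_eq (fun w => x 0 j * dcoef l (col_r i) w (col_u i)) size_j).
by apply: eq_bigr => t _; rewrite mulrA.
Qed.

Lemma in_target_eq f g : in_target N l f -> in_target N l g ->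
  (forall i, f (col_r i) (col_u i) = g (col_r i) (col_u i)) -> f = g.
Proof.
move=> f_tg g_tg fg_diag; apply: functional_extensionality => r.
apply: functional_extensionality => u.
have [/and4P[r_ge r_le /eqP size_u /eqP u_l]|out] :=
  boolP [&& 1 <= r, 2 * r + 1 <= N, size u == N - (2 * r + 1) & inB_level u l.-1]%N.
  have w_N : size (cword r.-1 0 ++ u) = N by rewrite size_cat size_cword size_u; lia.
  have w_l : levelB (cword r.-1 0 ++ u) = Some l by rewrite levelB_cword0 u_l /= prednK.
  have [i w_i] := basis_word_surj w_N w_l; have [r_eq u_eq] := diag_cword u r_ge.
  by have := fg_diag i; rewrite /col_r /col_u w_i r_eq u_eq.
have out0 h : in_target N l h -> h r u = 0.
  move=> h_tg; apply/eqP; apply: contraNT out => /h_tg[r_ge r_le size_u u_l].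
  by rewrite r_ge r_le size_u eqxx u_l.
by rewrite !out0.
Qed.

Lemma dphi_mx_unit : dphi_mx \in unitmx.
Proof.
rewrite -row_free_unit -kermx_eq0 -submx0; apply/rV_subP => x /sub_kermxP xA0.
suff -> : x = 0 by rewrite sub0mx.
have dphi0 : dphi N l (of_row x) = fun _ _ => 0.
  apply: in_target_eq => [|r u|i]; [exact: dphi_in_target | by rewrite eqxx |].
  by rewrite -mulmx_dphi_mx xA0 mxE.
apply/rowP => j; rewrite mxE -of_row_basis_word; apply: (in_ker_eq0 l_gt0).
by split=> [|r u]; [exact: in_gr_of_row | rewrite dphi0].
Qed.

Lemma dphi_surj g : in_target N l g -> exists2 v, in_gr N l v & dphi N l v = g.
Proof.
move=> g_tg; pose y := \row_i g (col_r i) (col_u i).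
exists (of_row (y *m invmx dphi_mx)); first exact: in_gr_of_row.
apply: in_target_eq g_tg _ => [|i]; first exact: dphi_in_target.
by rewrite -mulmx_dphi_mx mulmxKV ?dphi_mx_unit // mxE.
Qed.

End Surjectivity.

Theorem mainTheorem17 (N l : nat) :
  (1 <= N)%N -> (1 <= l)%N -> bij_on (in_gr N l) (in_target N l) (dphi N l).
Proof.
move=> _ l_gt0; split.
- by move=> v _; exact: dphi_in_target.
- exact: dphi_inj.
- exact: dphi_surj.
Qed.
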